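(* Let $\rho^{AB}=\frac14\big(\mathbb{I}\otimes\mathbb{I}+\vec x\cdot\vec\sigma\otimes\mathbb{I}+\sum_{i=1}^3 t_i\,\sigma_i\otimes\sigma_i\big)$ be a two-qubit density matrix (i.e. $\vec y=0$) with $\vec x\in\mathbb{R}^3$ and $T=\mathrm{diag}\{t_1,t_2,t_3\}$ satisfying $T^t\vec x=0$. Then $$\min_{\{\Pi_k^B\}}S(\rho^A|\{\Pi_k^B\})=h_2\!\left(\frac{1+\sqrt{|\vec x|^2+t_{\max}^2}}{2}\right),\qquad t_{\max}=\max\{|t_1|,|t_2|,|t_3|\},$$ the minimum being over all von Neumann measurements on qubit $B$, and it is attained when the measurement direction $\hat n$ is an eigenvector of $T^tT$ for its largest eigenvalue $t_{\max}^2$.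
   Context: $\sigma_i$ are the Pauli matrices, $\vec a\cdot\vec\sigma=\sum_i a_i\sigma_i$. A von Neumann measurement on $B$ with direction $\hat n$ (unit vector in $\mathbb{R}^3$) is $\Pi_k^B=\frac12(\mathbb{I}\pm\hat n\cdot\vec\sigma)$, $k=0,1$; $p_k=\mathrm{Tr}[(\mathbb{I}\otimes\Pi_k^B)\rho^{AB}(\mathbb{I}\otimes\Pi_k^B)]$, $\rho^A_k=\mathrm{Tr}_B[(\mathbb{I}\otimes\Pi_k^B)\rho^{AB}(\mathbb{I}\otimes\Pi_k^B)]/p_k$, and $S(\rho^A|\{\Pi_k^B\})=\sum_kp_kS(\rho^A_k)$ with $S(\rho)=-\mathrm{Tr}(\rho\log_2\rho)$. $h_2(x)=-x\log_2x-(1-x)\log_2(1-x)$. *)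

From HB Require Import structures.
From mathcomp Require Import all_boot all_order all_algebra.
From mathcomp Require Import complex mxtens.
From mathcomp Require Import reals exp.

Set Implicit Arguments.
Unset Strict Implicit.
Unset Printing Implicit Defensive.

Import Order.TTheory GRing.Theory Num.Theory.
Local Open Scope ring_scope.

Section QDefs.
Variable R : realType.
Local Notation C := R[i].

Definition RtoC (a : R) : C := Complex a 0.

Definition adjmx {m n} (A : 'M[C]_(m, n)) : 'M[C]_(n, m) := map_mx (@conjc R) A^T.

(* Pauli matrices sigma_1, sigma_2, sigma_3, indexed by 'I_3 = {0,1,2} *)
Definition pauli (k : 'I_3) : 'M[C]_2 :=
  \matrix_(a < 2, b < 2)
    match nat_of_ord k with
    | 0 => if a != b then 1 else 0
    | 1 => if a == b then 0 else
             (if (nat_of_ord a == 0)%N then Complex 0 (-1) else Complex 0 1)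
    | _ => if a == b then (if (nat_of_ord a == 0)%N then 1 else -1) else 0
    end.

Definition dot_sigma (a : 'cV[R]_3) : 'M[C]_2 :=
  \sum_(k < 3) RtoC (a k 0) *: pauli k.

Definition rhoAB (x t : 'cV[R]_3) : 'M[C]_(2 * 2) :=
  RtoC (4%:R^-1) *:
    ((1 : 'M[C]_2) *t (1 : 'M[C]_2) + dot_sigma x *t (1 : 'M[C]_2)
     + \sum_(k < 3) RtoC (t k 0) *: (pauli k *t pauli k)).

Definition is_density_matrix {n} (rho : 'M[C]_n) : Prop :=
  [/\ adjmx rho = rho,
      (forall v : 'cV[C]_n, 0 <= (adjmx v *m rho *m v) 0 0)
    & \tr rho = 1].

Definition projB (n : 'cV[R]_3) (k : 'I_2) : 'M[C]_2 :=
  RtoC (2%:R^-1) *: (1 + ((-1) ^+ k) *: dot_sigma n).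

Definition post_meas (rho : 'M[C]_(2 * 2)) (n : 'cV[R]_3) (k : 'I_2) : 'M[C]_(2 * 2) :=
  ((1 : 'M[C]_2) *t projB n k) *m rho *m ((1 : 'M[C]_2) *t projB n k).

Definition ptraceB (M : 'M[C]_(2 * 2)) : 'M[C]_2 :=
  \matrix_(i < 2, j < 2) \sum_(l < 2) M (mxtens_index (i, l)) (mxtens_index (j, l)).

(* p_k = Tr[...] (a real number for a density matrix; we take its real part) *)
Definition meas_prob (rho : 'M[C]_(2 * 2)) (n : 'cV[R]_3) (k : 'I_2) : R :=
  complex.Re (\tr (post_meas rho n k)).

Definition cond_stateA (rho : 'M[C]_(2 * 2)) (n : 'cV[R]_3) (k : 'I_2) : 'M[C]_2 :=
  RtoC ((meas_prob rho n k)^-1) *: ptraceB (post_meas rho n k).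

(* base-2 logarithm; note ln 0 = 0 in mathcomp-analysis, so x log2 x = 0 at x = 0 *)
Definition log2 (x : R) : R := ln x / ln 2.

Definition h2 (x : R) : R := - x * log2 x - (1 - x) * log2 (1 - x).

Definition eigenvalues {n} (A : 'M[C]_n) : seq C :=
  sval (closed_field_poly_normal (char_poly A)).

(* von Neumann entropy S(rho) = -Tr(rho log2 rho) = - sum_lambda lambda log2 lambda
   over the eigenvalues of the (Hermitian) matrix rho *)
Definition vN_entropy {n} (rho : 'M[C]_n) : R :=
  - \sum_(z <- eigenvalues rho) (complex.Re z * log2 (complex.Re z)).

Definition cond_entropy (rho : 'M[C]_(2 * 2)) (n : 'cV[R]_3) : R :=
  \sum_(k < 2) meas_prob rho n k * vN_entropy (cond_stateA rho n k).

Definition sqnorm3 (a : 'cV[R]_3) : R := \sum_(k < 3) a k 0 ^+ 2.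

Definition is_unit3 (a : 'cV[R]_3) : Prop := sqnorm3 a = 1.

Definition tmax (t : 'cV[R]_3) : R :=
  Num.max `|t 0 0| (Num.max `|t 1 0| `|t 2%:R 0|).

End QDefs.

(** Measuring [B] along a unit vector [n] leaves [A], with probability [1/2]
    each, in the qubit state with Bloch vector [x + (-1)^k T n].  Because
    [T x = 0] these two vectors have squared length [|x|^2 + |T n|^2], and a
    qubit state with Bloch vector [w] has eigenvalues [(1 +- |w|) / 2], so the
    conditional entropy is [h2 ((1 + sqrt (|x|^2 + |T n|^2)) / 2)].  This is
    decreasing in [|T n|], which is at most [t_max] for unit [n], with equality
    for the eigenvectors of [T^t T] of eigenvalue [t_max^2] (e.g. a coordinate
    vector [e_j] with [|t_j| = t_max]). *)

From HB Require Import structures.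
From mathcomp Require Import all_boot all_order all_algebra.
From mathcomp Require Import complex mxtens.
From mathcomp Require Import reals exp.
From mathcomp Require Import ring lra.

Set Implicit Arguments.
Unset Strict Implicit.
Unset Printing Implicit Defensive.

Import Order.TTheory GRing.Theory Num.Theory.
Local Open Scope ring_scope.

Local Ltac eq_complex_parts :=
  rewrite /RtoC; simpc; apply/eqP; rewrite eq_complex /=; apply/andP; split; apply/eqP.

Lemma big_ord2 (V : nmodType) (F : 'I_2 -> V) : \sum_(k < 2) F k = F 0 + F 1.
Proof. by rewrite !big_ord_recl big_ord0 addr0; congr (F _ + F _); apply: val_inj. Qed.

Lemma big_ord3 (V : nmodType) (F : 'I_3 -> V) :
  \sum_(k < 3) F k = F 0 + F 1 + F 2%:R.
Proof.
rewrite !big_ord_recl big_ord0 addr0 addrA.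
by congr (F _ + F _ + F _); apply: val_inj.
Qed.

Lemma ord2_cases (i : 'I_2) : i = 0 \/ i = 1.
Proof. by case: i => [[|[|//]] ?]; [left | right]; apply: val_inj. Qed.

Lemma ord3_cases (i : 'I_3) : [\/ i = 0, i = 1 | i = 2%:R].
Proof.
by case: i => [[|[|[|//]]] ?]; [apply: Or31 | apply: Or32 | apply: Or33]; apply: val_inj.
Qed.

Lemma det_mx2 (K : comPzRingType) (A : 'M[K]_2) :
  \det A = A 0 0 * A 1 1 - A 0 1 * A 1 0.
Proof.
rewrite (expand_det_row _ 0) big_ord2 /cofactor !det_mx11 !mxE /=.
have -> : lift 0 (0 : 'I_1) = 1 :> 'I_2 by apply: val_inj.
have -> : lift 1 (0 : 'I_1) = 0 :> 'I_2 by apply: val_inj.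
by rewrite expr0 expr1 mul1r mulN1r mulrN.
Qed.

Section BinaryEntropy.
Variable R : realType.

Lemma xlnx_ge_tangent (u v : R) : 0 < u -> 0 < v ->
  u * ln u + (ln u + 1) * (v - u) <= v * ln v.
Proof.
move=> u0 v0.
have uv1 : -1 < u / v - 1 by rewrite ltrBrDr addrC subrr divr_gt0.
have := le_ln1Dx uv1; rewrite addrC subrK ln_div ?posrE // => ln_le.
have : v * (ln u - ln v) <= v * (u / v - 1) by rewrite ler_wpM2l // ltW.
have -> : v * (u / v - 1) = u - v by field; rewrite gt_eqF.
lra.
Qed.

Definition negentropy2 (a : R) := a * ln a + (1 - a) * ln (1 - a).

Lemma h2E (a : R) : h2 a = - negentropy2 a / ln 2%:R.
Proof.
have ln2_gt0 : 0 < ln (2%:R : R) by apply: ln_gt0; rewrite ltr1n.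
by rewrite /h2 /negentropy2 /log2; field; rewrite gt_eqF.
Qed.

(* [ln] is [0] on nonpositive arguments, so the inequality persists past [b = 1]:
   this is why the main theorem needs no positivity of the state. *)
Lemma negentropy2_ge (a b : R) : 2%:R^-1 <= a -> a <= b ->
  negentropy2 a <= negentropy2 b.
Proof.
move=> ha hab; rewrite /negentropy2.
have a0 : 0 < a by apply: lt_le_trans ha; rewrite invr_gt0 ltr0n.
have b0 : 0 < b by apply: lt_le_trans hab.
have [b1|b1] := ltP b 1.
  have a1 : 0 < 1 - a by rewrite subr_gt0; apply: le_lt_trans b1.
  have b1' : 0 < 1 - b by rewrite subr_gt0.
  (* Tangents of [x ln x] at [a] and [1 - a]; their linear parts add up to
     [(b - a) (ln a - ln (1 - a)) >= 0]. *)
  have := xlnx_ge_tangent a0 b0; have := xlnx_ge_tangent a1 b1'.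
  have ln_le : ln (1 - a) <= ln a.
    rewrite ler_ln ?posrE //.
    have : 2%:R^-1 + 2%:R^-1 = 1 :> R by field.
    lra.
  have : 0 <= (b - a) * (ln a - ln (1 - a)) by apply: mulr_ge0; lra.
  lra.
rewrite [ln (1 - b)]ln0; last by lra.
have lnb : 0 <= ln b by apply: ln_ge0.
have [a1|a1] := ltP a 1.
  have : ln a <= 0 by apply: ln_le0; lra.
  have : ln (1 - a) <= 0 by apply: ln_le0; lra.
  have : 0 < 1 - a by lra.
  nra.
rewrite [ln (1 - a)]ln0; last by lra.
have : 0 <= ln a by apply: ln_ge0.
have : ln a <= ln b by rewrite ler_ln ?posrE.
nra.
Qed.

Lemma h2_half_le (r r' : R) : 0 <= r -> r <= r' ->
  h2 ((1 + r') / 2%:R) <= h2 ((1 + r) / 2%:R).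
Proof.
move=> r0 rr'.
have ln2_gt0 : 0 < ln (2%:R : R) by apply: ln_gt0; rewrite ltr1n.
rewrite !h2E ler_pM2r ?invr_gt0 // lerN2; apply: negentropy2_ge.
  by rewrite mulrDl mul1r lerDl divr_ge0.
by rewrite ler_pM2r ?invr_gt0 ?ltr0n // lerD2l.
Qed.

End BinaryEntropy.

Section BlochStates.
Variable R : realType.
Local Notation C := R[i].

Lemma dot_sigmaE (a : 'cV[R]_3) : dot_sigma a =
  \matrix_(i < 2, j < 2)
   if i == 0 then (if j == 0 then Complex (a 2%:R 0) 0 else Complex (a 0 0) (- a 1 0))
   else (if j == 0 then Complex (a 0 0) (a 1 0) else Complex (- a 2%:R 0) 0).
Proof.
apply/matrixP => i j; rewrite /dot_sigma summxE big_ord3 !mxE.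
by case: (ord2_cases i) => ->; case: (ord2_cases j) => -> /=; rewrite /RtoC; simpc.
Qed.

Lemma projB_idem (n : 'cV[R]_3) k : is_unit3 n -> projB n k *m projB n k = projB n k.
Proof.
rewrite /is_unit3 /sqnorm3 big_ord3 => n1.
apply/matrixP => i j; rewrite /projB dot_sigmaE !mxE !big_ord2 !mxE.
by case: (ord2_cases k) => -> /=; rewrite ?expr0 ?expr1;
  case: (ord2_cases i) => -> /=; case: (ord2_cases j) => -> /=; eq_complex_parts; nra.
Qed.

Lemma mxtrace_projB (n : 'cV[R]_3) k : \tr (projB n k) = 1.
Proof.
rewrite /projB dot_sigmaE /mxtrace big_ord2 !mxE /=.
by case: (ord2_cases k) => -> /=; rewrite ?expr0 ?expr1; eq_complex_parts; lra.
Qed.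

Lemma mxtrace_pauli_projB (n : 'cV[R]_3) (k : 'I_2) (j : 'I_3) :
  \tr (pauli R j *m projB n k) = RtoC ((-1) ^+ k * n j 0).
Proof.
rewrite /projB dot_sigmaE /mxtrace big_ord2 !mxE !big_ord2 !mxE /=.
by case: (ord2_cases k) => -> /=; rewrite ?expr0 ?expr1;
  case: (ord3_cases j) => -> /=; eq_complex_parts; lra.
Qed.

Lemma mxtrace_ptraceB (M : 'M[C]_(2 * 2)) : \tr (ptraceB M) = \tr M.
Proof.
rewrite [RHS]/mxtrace (reindex (@mxtens_index 2 2)) /=; last first.
  by exists (@mxtens_unindex 2 2) => ? _; [apply: mxtens_indexK | apply: mxtens_unindexK].
under [LHS]eq_bigr do rewrite mxE.
by rewrite pair_big /=; apply: eq_bigr => -[].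
Qed.

Definition ptraceB_sandwich (P : 'M[C]_2) (M : 'M[C]_(2 * 2)) : 'M[C]_2 :=
  ptraceB ((1 *t P) *m M *m (1 *t P)).

Lemma ptraceB_sandwich_is_linear P : linear (ptraceB_sandwich P).
Proof.
move=> c M N; rewrite /ptraceB_sandwich mulmxDr mulmxDl -scalemxAr -scalemxAl.
apply/matrixP => i j; rewrite !mxE mulr_sumr -big_split.
by apply: eq_bigr => l _; rewrite !mxE.
Qed.

HB.instance Definition _ P := GRing.isLinear.Build C _ _ _ (ptraceB_sandwich P)
  (ptraceB_sandwich_is_linear P).

Lemma ptraceB_sandwich_tens (P A B : 'M[C]_2) :
  ptraceB_sandwich P (A *t B) = \tr (P *m B *m P) *: A.
Proof.
rewrite /ptraceB_sandwich !tensmx_mul mul1mx mulmx1; apply/matrixP => i j.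
by rewrite !mxE /mxtrace mulr_suml; apply: eq_bigr => l _; rewrite tensmxE mulrC.
Qed.

Definition bloch_state (w : 'cV[R]_3) : 'M[C]_2 := RtoC 2%:R^-1 *: (1 + dot_sigma w).

Lemma ptraceB_post_meas (x t n : 'cV[R]_3) k : is_unit3 n ->
  ptraceB (post_meas (rhoAB x t) n k) =
  RtoC 2%:R^-1 *: bloch_state (x + (-1) ^+ k *: (diag_mx t^T *m n)).
Proof.
move=> n1; rewrite -[LHS]/(ptraceB_sandwich (projB n k) _) /rhoAB.
rewrite linearZ !linearD linear_sum /= !ptraceB_sandwich_tens mulmx1 projB_idem //.
under eq_bigr do rewrite linearZ /= ptraceB_sandwich_tens
  mxtrace_mulC mulmxA projB_idem // mxtrace_mulC mxtrace_pauli_projB.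
rewrite mxtrace_projB /bloch_state scalerA; congr (_ *: _); first by eq_complex_parts; field.
rewrite !scale1r -addrA; congr (_ + _).
apply/matrixP => i j; rewrite !dot_sigmaE !mxE !summxE !big_ord3 !mxE.
by case: (ord2_cases i) => ->; case: (ord2_cases j) => -> /=; eq_complex_parts; ring.
Qed.

Lemma eigenvalues_mx2 (M : 'M[C]_2) :
  exists a b, [/\ eigenvalues M = [:: a; b], a + b = \tr M & a * b = \det M].
Proof.
rewrite /eigenvalues; case: (closed_field_poly_normal (char_poly M)) => s /= charM.
rewrite (monicP (char_poly_monic M)) scale1r in charM.
have : size s = 2%N.
  by have := size_prod_XsubC s id; rewrite -charM size_char_poly => -[].
case: s charM => [|a [|b [|? ?]]] //= charM _.
have quadE : ('X - a%:P) * ('X - b%:P) = 'X^2 + (- (a + b))%:P * 'X + (a * b)%:P.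
  by rewrite polyCN polyCD polyCM; ring.
move: charM; rewrite !big_cons big_nil mulr1 quadE => charM.
have := char_poly_trace M; have := char_poly_det M.
rewrite charM !coefE /= => detE /(_ isT) trE.
exists a, b; split => //.
  by move: trE; rewrite add0r addr0 mulr1 => /oppr_inj.
by rewrite sqrrN expr1n mul1r in detE; rewrite -detE add0r mulr0 add0r.
Qed.

Lemma mxtrace_bloch_state (w : 'cV[R]_3) : \tr (bloch_state w) = 1.
Proof. by rewrite /bloch_state /mxtrace big_ord2 dot_sigmaE !mxE /=; eq_complex_parts; lra. Qed.

Lemma det_bloch_state (w : 'cV[R]_3) :
  \det (bloch_state w) = RtoC ((1 - sqnorm3 w) / 4%:R).
Proof.
rewrite /bloch_state det_mx2 dot_sigmaE !mxE /sqnorm3 big_ord3 /=.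
by eq_complex_parts; field.
Qed.

Lemma vN_entropy_bloch_state (w : 'cV[R]_3) :
  vN_entropy (bloch_state w) = h2 ((1 + Num.sqrt (sqnorm3 w)) / 2%:R).
Proof.
set r := Num.sqrt (sqnorm3 w).
have r2 : r ^+ 2 = sqnorm3 w by rewrite sqr_sqrtr // sumr_ge0 // => k _; apply: sqr_ge0.
have [a [b [eigE trE detE]]] := eigenvalues_mx2 (bloch_state w).
rewrite mxtrace_bloch_state in trE; rewrite det_bloch_state -r2 in detE.
have bE : b = 1 - a by rewrite -trE addrC addKr.
have : (a - RtoC ((1 + r) / 2%:R)) * (a - RtoC ((1 - r) / 2%:R)) = 0.
  have : a * a - a * (a + b) + a * b = 0 by ring.
  rewrite trE detE => <-.
  by case: a {eigE trE detE bE} => a1 a2; eq_complex_parts; field.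
rewrite /vN_entropy eigE !big_cons big_nil addr0 bE /h2.
move/eqP; rewrite mulf_eq0 !subr_eq0 => /orP[] /eqP -> /=.
  by ring.
have -> : 1 - (1 - r) / 2%:R = (1 + r) / 2%:R by field.
have -> : 1 - (1 + r) / 2%:R = (1 - r) / 2%:R by field.
ring.
Qed.

End BlochStates.

Section Measurement.
Variable R : realType.
Local Notation C := R[i].

Lemma meas_prob_rhoAB (x t n : 'cV[R]_3) k : is_unit3 n ->
  meas_prob (rhoAB x t) n k = 2%:R^-1.
Proof.
move=> n1; rewrite /meas_prob -mxtrace_ptraceB ptraceB_post_meas //.
by rewrite mxtraceZ mxtrace_bloch_state mulr1.
Qed.

Lemma cond_stateA_rhoAB (x t n : 'cV[R]_3) k : is_unit3 n ->
  cond_stateA (rhoAB x t) n k = bloch_state (x + (-1) ^+ k *: (diag_mx t^T *m n)).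
Proof.
move=> n1; rewrite /cond_stateA meas_prob_rhoAB // ptraceB_post_meas // scalerA.
have -> : RtoC (2%:R^-1)^-1 * RtoC 2%:R^-1 = 1 :> C.
  by rewrite /RtoC; simpc; rewrite invrK mulfV ?pnatr_eq0.
by rewrite scale1r.
Qed.

Lemma sqnorm3D_orth (a b : 'cV[R]_3) : \sum_(i < 3) a i 0 * b i 0 = 0 ->
  sqnorm3 (a + b) = sqnorm3 a + sqnorm3 b.
Proof.
by rewrite /sqnorm3 !big_ord3 !mxE !sqrrD => ab0; lra.
Qed.

Lemma sqnorm3_signZ (a : 'cV[R]_3) (k : nat) : sqnorm3 ((-1) ^+ k *: a) = sqnorm3 a.
Proof. by apply: eq_bigr => i _; rewrite mxE exprMn sqrr_sign mul1r. Qed.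

Lemma cond_entropy_rhoAB (x t n : 'cV[R]_3) : is_unit3 n -> (diag_mx t^T)^T *m x = 0 ->
  cond_entropy (rhoAB x t) n =
  h2 ((1 + Num.sqrt (sqnorm3 x + sqnorm3 (diag_mx t^T *m n))) / 2%:R).
Proof.
move=> n1 Tx0.
have tx0 i : t i 0 * x i 0 = 0.
  by have := congr1 (fun v : 'cV[R]_3 => v i 0) Tx0; rewrite /= tr_diag_mx mul_diag_mx !mxE.
have orth (k : 'I_2) : \sum_(i < 3) x i 0 * ((-1) ^+ k *: (diag_mx t^T *m n)) i 0 = 0.
  rewrite big1 // => i _; rewrite mul_diag_mx !mxE mulrCA [x i 0 * _]mulrA.
  by rewrite [x i 0 * _]mulrC tx0 mul0r mulr0.
rewrite /cond_entropy big_ord2 !meas_prob_rhoAB // !cond_stateA_rhoAB //.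
rewrite !vN_entropy_bloch_state !sqnorm3D_orth // !sqnorm3_signZ.
have half2 : 2%:R^-1 + 2%:R^-1 = 1 :> R by field.
by rewrite -mulrDl half2 mul1r.
Qed.

Lemma tr_diag_mul_diag_mxE (t n : 'cV[R]_3) i :
  (((diag_mx t^T)^T *m diag_mx t^T) *m n) i 0 = t i 0 ^+ 2 * n i 0.
Proof. by rewrite tr_diag_mx -mulmxA !mul_diag_mx !mxE mulrA expr2. Qed.

Lemma sqr_le_tmax (t : 'cV[R]_3) i : t i 0 ^+ 2 <= tmax t ^+ 2.
Proof.
have tmax_ge0 : 0 <= tmax t by rewrite /tmax le_max normr_ge0.
rewrite -real_normK ?num_real // lerXn2r ?nnegrE ?normr_ge0 //.
by rewrite /tmax; case: (ord3_cases i) => ->; rewrite !le_max lexx ?orbT.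
Qed.

Lemma tmax_attained (t : 'cV[R]_3) : exists j : 'I_3, `|t j 0| = tmax t.
Proof.
rewrite /tmax /Num.max /Order.max /=.
by case: ifP => _; [case: ifP => _; [exists 2%:R | exists 1] | exists 0].
Qed.

Lemma sqnorm3_diag_mul_le (t n : 'cV[R]_3) : is_unit3 n ->
  sqnorm3 (diag_mx t^T *m n) <= tmax t ^+ 2.
Proof.
rewrite /is_unit3 /sqnorm3 => n1; rewrite -[leRHS]mulr1 -n1 mulr_sumr.
apply: ler_sum => i _; rewrite mul_diag_mx !mxE exprMn.
by rewrite ler_wpM2r ?sqr_ge0 ?sqr_le_tmax.
Qed.

Lemma sqnorm3_diag_mul_eigen (t n : 'cV[R]_3) : is_unit3 n ->
  ((diag_mx t^T)^T *m diag_mx t^T) *m n = tmax t ^+ 2 *: n ->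
  sqnorm3 (diag_mx t^T *m n) = tmax t ^+ 2.
Proof.
rewrite /is_unit3 /sqnorm3 => n1 eig; rewrite -[RHS]mulr1 -n1 mulr_sumr.
apply: eq_bigr => i _; have := congr1 (fun v : 'cV[R]_3 => v i 0) eig.
rewrite /= tr_diag_mul_diag_mxE mul_diag_mx !mxE => eig_i.
by rewrite exprMn !expr2 mulrA -expr2 eig_i mulrA -expr2.
Qed.

Lemma is_unit3_delta (j : 'I_3) : is_unit3 (delta_mx j 0 : 'cV[R]_3).
Proof.
rewrite /is_unit3 /sqnorm3 (bigD1 j) //= big1 => [|i /negbTE ij]; rewrite mxE ?eqxx ?ij.
  by rewrite expr1n addr0.
by rewrite expr0n.
Qed.

Lemma delta_mx_eigen_tmax (t : 'cV[R]_3) (j : 'I_3) : `|t j 0| = tmax t ->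
  ((diag_mx t^T)^T *m diag_mx t^T) *m delta_mx j 0 = tmax t ^+ 2 *: delta_mx j (0 : 'I_1).
Proof.
move=> tj; apply/matrixP => i k; rewrite (ord1 k) tr_diag_mul_diag_mxE !mxE.
by case: eqP => [->|_]; rewrite ?mulr0 // -tj real_normK ?num_real.
Qed.

End Measurement.

Theorem mainTheorem3 (R : realType) (x t : 'cV[R]_3) :
  is_density_matrix (rhoAB x t) ->
  (diag_mx t^T)^T *m x = 0 ->
  let val := h2 ((1 + Num.sqrt (sqnorm3 x + tmax t ^+ 2)) / 2%:R) in
  (forall n : 'cV[R]_3, is_unit3 n -> val <= cond_entropy (rhoAB x t) n) /\
  (exists n : 'cV[R]_3, is_unit3 n /\ cond_entropy (rhoAB x t) n = val) /\
  (forall n : 'cV[R]_3, is_unit3 n ->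
     ((diag_mx t^T)^T *m diag_mx t^T) *m n = tmax t ^+ 2 *: n ->
     cond_entropy (rhoAB x t) n = val).
Proof.
move=> _ Tx0 val.
have attained n : is_unit3 n ->
    ((diag_mx t^T)^T *m diag_mx t^T) *m n = tmax t ^+ 2 *: n ->
    cond_entropy (rhoAB x t) n = val.
  by move=> n1 eig; rewrite cond_entropy_rhoAB // sqnorm3_diag_mul_eigen.
split; [|split] => //.
  move=> n n1; rewrite cond_entropy_rhoAB //; apply: h2_half_le; first exact: sqrtr_ge0.
  by rewrite ler_wsqrtr // lerD2l sqnorm3_diag_mul_le.
have [j tj] := tmax_attained t.
exists (delta_mx j 0); split; first exact: is_unit3_delta.
by apply: attained; [exact: is_unit3_delta | exact: delta_mx_eigen_tmax].
Qed.
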